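(* Let $r\ge2$, $\ell\in\mathcal M^1(\mathcal R_r)$ and $\epsilon>0$. If $\ell^i\le\epsilon$ for some $i\in[r]$, then $\ell^j>-\log(\exp(\epsilon)-1)$ for every $j\in[r]\setminus\{i\}$.
   Context: $\mathcal R_r$ is the rose with one vertex and $r$ loop edges identified with $[r]=\{1,\dots,r\}$; a length function is $\ell=(\ell^1,\dots,\ell^r)\in\mathbb R^r_{>0}$. The entropy is $\mathfrak h_{\mathcal R_r}(\ell)=\lim_{t\to\infty}\frac1t\log\#\{\gamma:\ell(\gamma)\le t\}$ over based circuits $\gamma$ (cyclically reduced closed edge paths in the oriented petals), and $\mathcal M^1(\mathcal R_r)=\{\ell:\mathfrak h_{\mathcal R_r}(\ell)=1\}$. *)

From HB Require Import structures.
From mathcomp Require Import all_boot all_order all_algebra.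
From mathcomp Require Import all_classical all_reals all_analysis.
Set Implicit Arguments. Unset Strict Implicit. Unset Printing Implicit Defensive.
Import Order.TTheory GRing.Theory Num.Theory numFieldNormedType.Exports.
Local Open Scope classical_set_scope.
Local Open Scope ring_scope.

(* A letter of the rose R_r: a petal i : 'I_r traversed with orientation b
   (true = positive, false = reversed). *)
Definition letter (r : nat) := ('I_r * bool)%type.

Definition inv_letters (r : nat) (a b : letter r) : bool :=
  (a.1 == b.1) && (a.2 != b.2).

(* Based circuit: nonempty closed edge path which is cyclically reduced,
   i.e. no backtracking between consecutive letters nor between the last
   and the first letter (path.v's [cycle]). *)
Definition is_circuit (r n : nat) (w : n.-tuple (letter r)) : bool :=
  (0 < n)%N && cycle (fun a b => ~~ inv_letters a b) w.

Definition word_length (R : realType) (r : nat) (l : 'I_r -> R) (w : seq (letter r)) : R :=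
  \sum_(a <- w) l a.1.

(* Since every letter has length >= min_i l i
   >= (sum_i (l i)^-1)^-1, circuits with l(gamma) <= t have at most
   truncn (t * sum_i (l i)^-1) letters, so summing over word sizes below
   that bound (+1) counts all of them (for positive l). *)
Definition count_circuits (R : realType) (r : nat) (l : 'I_r -> R) (t : R) : nat :=
  \sum_(n < (Num.truncn (t * \sum_(i < r) (l i)^-1)).+1)
     #|[set w : n.-tuple (letter r) | is_circuit w && (word_length l w <= t)%R]|.

Definition entropy_is (R : realType) (r : nat) (l : 'I_r -> R) (h : R) : Prop :=
  ln (count_circuits l t)%:R / t @[t --> +oo%R] --> (h : R).

Definition in_M1 (R : realType) (r : nat) (l : 'I_r -> R) : Prop :=
  (forall i, 0 < l i) /\ entropy_is l 1.

(* Key inequality: if l lies in M^1(R_r) and i != j, then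
   exp(-l_i) + exp(-l_j) <= 1.  Indeed, suppose u + v > 1 with
   u = exp(-l_i), v = exp(-l_j).  The binomial theorem yields n, p with
   K := C(n,p) and K u^(n-p) v^p > 1, i.e. L := (n-p) l_i + p l_j < ln K.
   A "block" is a positively oriented word of n letters, namely p letters
   on petal j at a chosen set of positions and petal i elsewhere; the
   concatenations of m blocks are K^m distinct circuits of length m L.
   Hence ln #{gamma : l(gamma) <= t} >= (t/L - 1) ln K for t >= L, so the
   entropy is at least ln K / L > 1, a contradiction.

   The theorem follows: if l_i <= eps then
   exp(-l_j) <= 1 - exp(-eps) = exp(-eps) (exp eps - 1) < exp eps - 1. *)

From HB Require Import structures.
From mathcomp Require Import all_boot all_order all_algebra.
From mathcomp Require Import all_classical all_reals all_analysis.
From mathcomp Require Import lra.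
Set Implicit Arguments.
Unset Strict Implicit.
Unset Printing Implicit Defensive.
Import Order.TTheory GRing.Theory Num.Theory numFieldNormedType.Exports.
Local Open Scope classical_set_scope.
Local Open Scope ring_scope.

Lemma bernoulli_ineq (R : realFieldType) (d : R) (k : nat) :
  0 <= d -> 1 + k%:R * d <= (1 + d) ^+ k.
Proof.
move=> d0; elim: k => [|k IHk]; first by rewrite expr0 mul0r addr0.
rewrite exprS -natr1.
have kd0 : 0 <= k%:R * d by apply: mulr_ge0.
have : (1 + d) * (1 + k%:R * d) <= (1 + d) * (1 + d) ^+ k.
  by apply: ler_wpM2l => //; lra.
have : 0 <= d * (k%:R * d) by apply: mulr_ge0.
nra.
Qed.

(* Powers of s > 1 eventually beat linear growth: s^n > n + 1 for some n
   (take n = 2k with k d^2 > 2, where s = 1 + d). *)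
Lemma pow_exceeds_succ (R : realType) (s : R) : 1 < s -> exists n : nat, n.+1%:R < s ^+ n.
Proof.
move=> s1; set d := s - 1; have d0 : 0 < d by rewrite /d; lra.
set k := (Num.truncn (2 / (d * d))).+1.
have kdd : 2 < k%:R * (d * d) by rewrite -ltr_pdivrMr ?mulr_gt0 // truncnS_gt.
have kd0 : 0 <= k%:R * d by apply: mulr_ge0 => //; exact: ltW.
have sk : 1 + k%:R * d <= s ^+ k.
  by have := @bernoulli_ineq _ d k (ltW d0); rewrite [1 + d]addrC /d subrK.
exists (k + k)%N; rewrite exprD -addSn natrD -natr1.
have : (1 + k%:R * d) * (1 + k%:R * d) <= s ^+ k * s ^+ k.
  by apply: ler_pM => //; lra.
nra.
Qed.

(* If u + v > 1, some term of a binomial expansion of (u + v)^n exceeds 1: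
   otherwise (u + v)^n <= n + 1 for every n. *)
Lemma heavy_binomial_term (R : realType) (u v : R) : 0 < u -> 0 < v -> 1 < u + v ->
  exists n p : nat, (p <= n)%N /\ 1 < 'C(n, p)%:R * (u ^+ (n - p) * v ^+ p).
Proof.
move=> u0 v0 uv1; have [n growth] := pow_exceeds_succ uv1.
apply/not_existsP => /= light.
have : (u + v) ^+ n <= n.+1%:R.
  have -> : n.+1%:R = \sum_(p < n.+1) (1 : R) by rewrite sumr_const card_ord.
  rewrite exprDn; apply: ler_sum => p _.
  have := light n; move/forallNP => /(_ p) /not_andP [/(_ (ltn_ord p)) //|].
  by move/negP; rewrite -leNgt mulr_natl.
lra.
Qed.

Lemma growth_rate_ge (R : realType) (f : R -> R) (h a b t0 : R) :
  f t / t @[t --> +oo%R] --> (h : R) ->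
  (forall t, t0 <= t -> a * t - b <= f t) -> a <= h.
Proof.
move=> fh linear; rewrite leNgt; apply/negP => ha.
set c := (h + a) / 2; have hc : h < c by rewrite /c; lra.
have ca : 0 < a - c by rewrite /c; lra.
have below : \forall t \near +oo, f t / t < c by exact: cvgr_lt fh _ hc.
have above : \forall t \near +oo, c < f t / t.
  near=> t.
  have t0t : t0 <= t by near: t; apply: nbhs_pinfty_ge; rewrite num_real.
  have t1 : 1 <= t by near: t; apply: nbhs_pinfty_ge; rewrite num_real.
  have tb : b / (a - c) < t by near: t; apply: nbhs_pinfty_gt; rewrite num_real.
  rewrite ltr_pdivlMr ?(lt_le_trans ltr01) //.
  rewrite ltr_pdivrMr // in tb; have := linear t t0t; nra.
have [t [lt_c gt_c]] := filter_ex (filterI below above).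
by have := lt_trans lt_c gt_c; rewrite ltxx.
Unshelve. all: end_near.
Qed.

Section BlockWords.
Variables (r : nat) (i j : 'I_r) (m n : nat).

Definition block (B : {set 'I_n}) : seq (letter r) :=
  [seq (if o \in B then j else i, true) | o <- enum 'I_n].

Definition block_seq (F : {ffun 'I_m -> {set 'I_n}}) : seq (letter r) :=
  flatten [seq block (F b) | b <- enum 'I_m].

Lemma shape_blocks (F : 'I_m -> {set 'I_n}) :
  shape [seq block (F b) | b <- enum 'I_m] = nseq m n.
Proof.
have /all_pred1P -> : all (pred1 n) (shape [seq block (F b) | b <- enum 'I_m]).
  by apply/allP => _ /mapP [_ /mapP [b _ ->] ->]; rewrite /= size_map size_enum_ord.
by rewrite !size_map -enumT size_enum_ord.
Qed.

Lemma size_block_seq F : size (block_seq F) == (m * n)%N.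
Proof. by rewrite size_flatten shape_blocks sumn_nseq mulnC. Qed.

Definition block_word F : (m * n).-tuple (letter r) := Tuple (size_block_seq F).

(* All letters are positively oriented, so a block word never backtracks. *)
Lemma block_word_circuit F : (0 < m * n)%N -> is_circuit (block_word F).
Proof.
move=> mn0; rewrite /is_circuit mn0 /=.
apply: (@sub_in_cycle _ (fun a : letter r => a.2) (fun _ _ => true)).
- move=> [x1 x2] [y1 y2]; rewrite /inv_letters !unfold_in /= => -> -> _.
  by rewrite andbF.
- apply/allP => a /flattenP [w /mapP [b _ ->]]; by case/mapP => o _ ->.
- by case: (block_seq F) => //= x s; apply/(pathP x).
Qed.

(* Blocks of equal size can be read back from their concatenation. *)
Lemma block_word_inj : i != j -> injective block_word.
Proof.
move=> ij F1 F2 /(congr1 val) /= E.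
have := congr1 (reshape (nseq m n)) E; rewrite /block_seq.
rewrite -{1}(shape_blocks F1) -(shape_blocks F2) !flattenK => /eq_in_map blocks.
apply/ffunP => b; apply/setP => o.
have /eq_in_map /(_ o) := blocks b (mem_enum _ b).
rewrite mem_enum => /(_ isT) [].
by case: (o \in F1 b); case: (o \in F2 b) => // eij; rewrite eij eqxx in ij.
Qed.

Variables (R : realType) (l : 'I_r -> R).

Lemma block_length (B : {set 'I_n}) :
  \sum_(a <- block B) l a.1 = (n - #|B|)%:R * l i + #|B|%:R * l j.
Proof.
rewrite big_map big_enum /= (bigID (mem B)) /= addrC.
rewrite [X in X + _](eq_bigr (fun=> l i)) => [|o /negPf -> //].
rewrite [X in _ + X](eq_bigr (fun=> l j)) => [|o -> //].
have cardCB : #|[predC B]| = (n - #|B|)%N.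
  by rewrite -[X in (X - _)%N](card_ord n) -(cardC B) addKn.
by rewrite !sumr_const !mulr_natl -cardCB.
Qed.

Lemma block_word_length p (F : {ffun 'I_m -> {set 'I_n}}) : (forall b, #|F b| = p) ->
  word_length l (block_word F) = m%:R * ((n - p)%:R * l i + p%:R * l j).
Proof.
move=> cardF; rewrite /word_length /= /block_seq big_flatten /= big_map.
under eq_bigr do rewrite block_length cardF.
by rewrite big_enum /= sumr_const card_ord [RHS]mulr_natl.
Qed.

End BlockWords.

Arguments block_word {r} i j {m n} F.

(* Each letter is at least (sum_k 1/l_k)^-1 long, which bounds the number
   of letters of a word by its length. *)
Lemma size_le_word_length (R : realType) (r : nat) (l : 'I_r -> R) (w : seq (letter r)) :
  (forall k, 0 < l k) -> (size w)%:R <= word_length l w * \sum_(k < r) (l k)^-1.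
Proof.
move=> lpos; rewrite /word_length big_distrl /= -sum1_size natr_sum.
apply: ler_sum => a _; rewrite (bigD1 a.1) //= mulrDr mulfV ?gt_eqF // lerDl.
by apply: mulr_ge0; [exact: ltW | apply: sumr_ge0 => k _; rewrite invr_ge0 ltW].
Qed.

(* Any set of circuits of a fixed number of letters and length at most t
   is counted by count_circuits: the word size lies below its cutoff. *)
Lemma card_le_count_circuits (R : realType) (r N : nat) (l : 'I_r -> R) (t : R)
    (A : {set N.-tuple (letter r)}) :
  (forall k, 0 < l k) -> (forall w, w \in A -> is_circuit w && (word_length l w <= t)) ->
  (#|A| <= count_circuits l t)%N.
Proof.
move=> lpos circA; have [->|[w wA]] := set_0Vmem A; first by rewrite cards0.
set S := \sum_(k < r) (l k)^-1.
have S0 : 0 <= S by apply: sumr_ge0 => k _; rewrite invr_ge0 ltW.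
have /andP [_ wt] := circA w wA.
have NtS : N%:R <= t * S.
  by rewrite -(size_tuple w); apply: le_trans (size_le_word_length w lpos) _; rewrite ler_wpM2r.
have NtS_trunc : (N < (Num.truncn (t * S)).+1)%N.
  by rewrite ltnS truncn_ge_nat // (le_trans _ NtS).
rewrite /count_circuits -/S (bigD1 (Ordinal NtS_trunc)) //=; apply: leq_trans (leq_addr _ _).
by apply: subset_leq_card; apply/fintype.subsetP => w' /circA; rewrite inE.
Qed.

(* The block words with p marks per block are C(n,p)^m distinct circuits
   of length m L, so they are all counted once m L <= t. *)
Lemma count_circuits_ge_blocks (R : realType) (r : nat) (l : 'I_r -> R) (i j : 'I_r)
    (m n p : nat) (t : R) :
  i != j -> (forall k, 0 < l k) -> (0 < m)%N -> (0 < n)%N ->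
  m%:R * ((n - p)%:R * l i + p%:R * l j) <= t ->
  ('C(n, p) ^ m <= count_circuits l t)%N.
Proof.
move=> ij lpos m0 n0 mLt.
pose D : {pred {ffun 'I_m -> {set 'I_n}}} := ffun_on [set B : {set 'I_n} | #|B| == p]%SET.
have -> : ('C(n, p) ^ m)%N = #|block_word i j @: D|.
  rewrite card_in_imset; last by move=> ? ? _ _; exact: block_word_inj.
  by rewrite card_ffun_on card_draws !card_ord.
apply: card_le_count_circuits => // _ /imsetP [F /ffun_onP FD ->].
rewrite block_word_circuit ?muln_gt0 ?m0 //= (block_word_length _ _ _ (p := p)) //.
by move=> b; have := FD b; rewrite inE => /eqP.
Qed.

Lemma block_weight_gt0 (R : realType) (r : nat) (l : 'I_r -> R) (i j : 'I_r) (n p : nat) :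
  (forall k, 0 < l k) -> (0 < n)%N -> 0 < (n - p)%:R * l i + p%:R * l j.
Proof.
move=> lpos n0; case: (posnP p) => [->|p0].
  by rewrite subn0 mul0r addr0 mulr_gt0 ?ltr0n.
by rewrite ltr_wpDl ?mulr_gt0 ?ltr0n // mulr_ge0 // ltW.
Qed.

(* With m = floor(t / L) blocks: ln count(t) >= m ln K >= (t/L - 1) ln K. *)
Lemma ln_count_circuits_ge (R : realType) (r : nat) (l : 'I_r -> R) (i j : 'I_r)
    (n p : nat) :
  i != j -> (forall k, 0 < l k) -> (0 < n)%N -> (p <= n)%N ->
  forall t, (n - p)%:R * l i + p%:R * l j <= t ->
  ln 'C(n, p)%:R / ((n - p)%:R * l i + p%:R * l j) * t - ln 'C(n, p)%:R
    <= ln (count_circuits l t)%:R.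
Proof.
move=> ij lpos n0 pn t Lt.
set L := (n - p)%:R * l i + p%:R * l j; set K := 'C(n, p)%:R.
have L0 : 0 < L by exact: block_weight_gt0.
have K0 : 0 < K by rewrite ltr0n bin_gt0.
have lnK0 : 0 <= ln K by rewrite ln_ge0 // ler1n bin_gt0.
set m := Num.truncn (t / L).
have m0 : (0 < m)%N by rewrite truncn_gt0 ler_pdivlMr // mul1r.
have mLt : m%:R * L <= t.
  by rewrite -ler_pdivlMr // truncn_le divr_ge0 // ltW // (lt_le_trans L0).
have tLm : t / L - 1 < m%:R by rewrite ltrBlDr natr1 truncnS_gt.
have cnt := count_circuits_ge_blocks ij lpos m0 n0 mLt.
have Cm0 : (0 < 'C(n, p) ^ m)%N by rewrite expn_gt0 bin_gt0 pn.
have mlnK : ln K * m%:R <= ln (count_circuits l t)%:R.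
  by rewrite mulr_natr -lnXn // -natrX ler_ln ?posrE ?ltr0n ?ler_nat // (leq_trans Cm0).
apply: le_trans mlnK.
have : ln K * (t / L - 1) <= ln K * m%:R by rewrite ler_wpM2l // ltW.
by rewrite mulrBr mulr1 mulrA mulrAC.
Qed.

Lemma petal_weights_le1 (R : realType) (r : nat) (l : 'I_r -> R) (i j : 'I_r) :
  in_M1 l -> i != j -> expR (- l i) + expR (- l j) <= 1.
Proof.
case=> lpos hent ij; rewrite leNgt; apply/negP => uv1.
have [n [p [pn heavy]]] := heavy_binomial_term (expR_gt0 (- l i)) (expR_gt0 (- l j)) uv1.
set L := (n - p)%:R * l i + p%:R * l j; set K : R := 'C(n, p)%:R.
have K0 : 0 < K by rewrite ltr0n bin_gt0.
have L_lt_lnK : L < ln K.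
  have heavyL : 1 < K * expR (- L).
    by rewrite /L opprD -!mulrN expRD !expRM_natl.
  by have := ln_gt0 heavyL; rewrite lnM ?posrE ?expR_gt0 // expRK subr_gt0.
have n0 : (0 < n)%N.
  case: (posnP n) => [n0|//]; move: pn L_lt_lnK; rewrite /L /K n0 leqn0 => /eqP ->.
  by rewrite bin0 ln1 !mul0r addr0 ltxx.
have L0 : 0 < L by exact: block_weight_gt0.
have := growth_rate_ge (f := fun t => ln (count_circuits l t)%:R) hent
  (ln_count_circuits_ge ij lpos n0 pn).
by rewrite ler_pdivrMr // mul1r leNgt L_lt_lnK.
Qed.

Theorem mainTheorem16 (R : realType) (r : nat) (l : 'I_r -> R) (eps : R) :
  (2 <= r)%N -> in_M1 l -> 0 < eps ->
  forall i : 'I_r, l i <= eps ->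
  forall j : 'I_r, j != i -> - ln (expR eps - 1) < l j.
Proof.
move=> _ lM1 eps0 i li_eps j ji.
have weights := petal_weights_le1 lM1 ji.
have gap_bound : 1 - expR (- eps) < expR eps - 1.
  have -> : 1 - expR (- eps) = expR (- eps) * (expR eps - 1).
    by rewrite mulrBr mulr1 -expRD addNr expR0.
  by rewrite gtr_pMl ?subr_gt0 ?expR_gt1 // expR_lt1 oppr_lt0.
have lj_weight : expR (- l j) < expR eps - 1.
  apply: le_lt_trans gap_bound; rewrite lerBrDr; apply: le_trans weights.
  by rewrite lerD2l ler_expR lerN2.
by rewrite ltrNl -[- l j]expRK ltr_ln ?posrE ?expR_gt0 // (le_lt_trans _ lj_weight).
Qed.
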